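(* Let $h : \mathbb{R}^n \to \mathbb{R}$, let $l, u \in \mathbb{R}^n$ with $l \le u$, and let $S = \{x \in [l,u] : h(x) \le 0\}$. Let $\bar x \in [l,u]$ with $h(\bar x) > 0$, and let $h_{ave} : \mathbb{R}^n \to \mathbb{R}$ be a differentiable concave underestimator of $h$ at $\bar x$. Define \[ \hat h(x) = \min \{ h_{ave}(z) + \nabla h_{ave}(z)^{\mathsf T}(x - z) : z \in [l,u],\ h_{ave}(z) \ge 0 \}. \] Then the set $C = \{x \in \mathbb{R}^n : \hat h(x) \ge 0\}$ is a convex $S$-free set, and $C \supseteq \{x \in \mathbb{R}^n : h_{ave}(x) \ge 0\}$.
   Context: A function $h_{ave} : \mathbb{R}^n \to \mathbb{R}$ is a concave underestimator of $h$ at $\bar x$ if $h_{ave}$ is concave, $h_{ave}(x) \le h(x)$ for all $x \in \mathbb{R}^n$, and $h_{ave}(\bar x) = h(\bar x)$. Here $[l,u] = \{x \in \mathbb{R}^n : l_i \le x_i \le u_i \text{ for all } i\}$. A set $C$ is $S$-free if it is convex and contains no point of $S$ in its interior. *)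

From HB Require Import structures.
From mathcomp Require Import all_boot all_order all_algebra.
From mathcomp Require Import all_classical all_reals all_analysis.
Set Implicit Arguments. Unset Strict Implicit. Unset Printing Implicit Defensive.
Import Order.TTheory GRing.Theory Num.Theory.
Import numFieldNormedType.Exports.
Local Open Scope classical_set_scope.
Local Open Scope ring_scope.

Definition box (R : realType) (n : nat) (l u : 'rV[R]_n) : set 'rV[R]_n :=
  [set x | forall i : 'I_n, l ord0 i <= x ord0 i <= u ord0 i].

Definition convex_set (R : realType) (n : nat) (C : set 'rV[R]_n) : Prop :=
  forall x y t, C x -> C y -> 0 <= t <= 1 -> C (t *: x + (1 - t) *: y).

Definition concave_fun (R : realType) (n : nat) (f : 'rV[R]_n -> R) : Prop :=
  forall x y t, 0 <= t <= 1 -> t * f x + (1 - t) * f y <= f (t *: x + (1 - t) *: y).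

Definition concave_underestimator (R : realType) (n : nat)
    (g h : 'rV[R]_n -> R) (xbar : 'rV[R]_n) : Prop :=
  concave_fun g /\ (forall x, g x <= h x) /\ g xbar = h xbar.

Definition S_free (R : realType) (n : nat) (S C : set 'rV[R]_n) : Prop :=
  convex_set C /\ S `&` interior C = set0.

(* hhat x = min { g z + grad g(z)^T (x - z) : z in [l,u], g z >= 0 };
   grad g(z)^T v is the differential 'd g z v. *)
Definition hhat (R : realType) (n : nat) (g : 'rV[R]_n -> R) (l u : 'rV[R]_n)
    (x : 'rV[R]_n) : R :=
  inf [set y | exists z, box l u z /\ 0 <= g z /\ y = g z + 'd g z (x - z)].

From Pilot Require Import Defs.
From HB Require Import structures.
From mathcomp Require Import all_boot all_order all_algebra.
From mathcomp Require Import all_classical all_reals all_analysis.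
From mathcomp Require Import ring lra.
Set Implicit Arguments.
Unset Strict Implicit.
Unset Printing Implicit Defensive.
Import Order.TTheory GRing.Theory Num.Theory.
Import numFieldNormedType.Exports.
Local Open Scope classical_set_scope.
Local Open Scope ring_scope.

(* Concavity and differentiability make every tangent plane of h_ave an
   overestimator, so C is the intersection of the tangent halfspaces
   {x | h_ave z + 'd h_ave z (x - z) >= 0} over the z in [l,u] with
   h_ave z >= 0: it is convex and contains {h_ave >= 0}.  If a point x of S
   were interior to C, the segment from x to xbar would cross the zero set of
   h_ave at some z in [l,u] (intermediate values, as
   h_ave x <= h x <= 0 < h_ave xbar).  The tangent at z vanishes at z and
   increases strictly towards xbar, so it is <= 0 at x, which cannot then be
   interior to the tangent halfspace at z. *)

Section TangentHalfspaces.
Variables (R : realType) (n : nat).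
Implicit Types (l u x y z d : 'rV[R]_n) (g : 'rV[R]_n -> R).

Lemma concave_le_tangent g z : concave_fun g -> differentiable g z ->
  forall y, g y <= g z + 'd g z (y - z).
Proof.
move=> cg dgz y; rewrite -lerBlDl -deriveE //; set v := y - z.
have /cvg_dnbhs_at_right quotient_cvg :
    (fun t : R => t^-1 *: ((g \o shift z) (t *: v) - g z)) @ 0^' --> 'D_v g z.
  exact: diff_derivable.
apply: (cvgr_to_ge quotient_cvg); near=> t.
have t_gt0 : 0 < t by near: t; exact: nbhs_right_gt.
have t_lt1 : t < 1 by near: t; exact: nbhs_right_lt.
have := cg y z t; rewrite (ltW t_gt0) (ltW t_lt1) => /(_ isT).
have -> : t *: y + (1 - t) *: z = t *: v + z.
  by rewrite /v scalerBr scalerBl scale1r addrCA addrC.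
by move=> concavity; rewrite /= /shift ler_pdivlMl //; nra.
Unshelve. all: by end_near.
Qed.

Definition tangent_halfspace g z := [set x | 0 <= g z + 'd g z (x - z)].

(* [convex_set] is qualified because all_analysis exports another one. *)
Lemma convex_set_box l u : Defs.convex_set (box l u).
Proof.
move=> x y t bx b_y /andP[t_ge0 t_le1] i; rewrite !mxE.
have /andP[lx xu] := bx i; have /andP[ly yu] := b_y i.
apply/andP; split; nra.
Qed.

Lemma convex_set_halfspace (L : {scalar 'rV[R]_n}) c z :
  Defs.convex_set [set x | 0 <= c + L (x - z)].
Proof.
move=> x y t /= Hx Hy /andP[t_ge0 t_le1].
have -> : t *: x + (1 - t) *: y - z = t *: (x - z) + (1 - t) *: (y - z).
  by apply/rowP => i; rewrite !mxE; ring.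
by rewrite linearD !linearZ /=; nra.
Qed.

Lemma convex_set_bigcap (I : Type) (P : set I) (F : I -> set 'rV[R]_n) :
  (forall i, P i -> Defs.convex_set (F i)) -> Defs.convex_set (\bigcap_(i in P) F i).
Proof. by move=> cF x y t Fx Fy t01 i Pi; apply: cF => //; [apply: Fx | apply: Fy]. Qed.

Lemma continuous_segment x y : continuous (fun t : R => t *: x + (1 - t) *: y).
Proof.
move=> t; apply: cvgD; apply: cvgZr_tmp => //.
by apply: cvgB => //; exact: cvg_cst.
Qed.

Lemma segment_root g x y : continuous g -> g x <= 0 -> 0 < g y ->
  exists2 t, 0 < t <= 1 & g (t *: x + (1 - t) *: y) = 0.
Proof.
move=> cg gx_le0 gy_gt0; pose phi t := g (t *: x + (1 - t) *: y).
have phi0 : phi 0 = g y by rewrite /phi scale0r add0r subr0 scale1r.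
have phi1 : phi 1 = g x by rewrite /phi scale1r subrr scale0r addr0.
have [t] : exists2 t, t \in `[0, 1] & phi t = 0.
  apply: IVT => //.
    apply: continuous_subspaceT => t.
    by apply: continuous_comp; [exact: continuous_segment | exact: cg].
  by rewrite phi0 phi1 ge_min le_max gx_le0 (ltW gy_gt0) orbT.
rewrite in_itv /= => /andP[t_ge0 t_le1] phit; exists t => //.
rewrite t_le1 andbT lt_neqAle t_ge0 andbT.
by apply: contraTneq gy_gt0 => t0; rewrite -phi0 {2}t0 phit ltxx.
Qed.

Lemma halfspace_interior_gt (L : {scalar 'rV[R]_n}) c z d x : 0 < L d ->
  interior [set y | 0 <= c + L (y - z)] x -> 0 < c + L (x - z).
Proof.
move=> Ld_gt0 x_int.
have line_cvg : (fun t : R => x - t *: d) @ 0^'+ --> x.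
  apply: cvg_at_right_filter; rewrite -{2}(subr0 x) -(scale0r d).
  apply: cvgB; first exact: cvg_cst.
  exact: cvgZr_tmp cvg_id.
have : \forall t \near 0^'+, 0 < t /\ 0 <= c + L (x - t *: d - z).
  near=> t; split; near: t; first exact: nbhs_right_gt.
  exact: line_cvg _ x_int.
case/filter_ex => t [t_gt0]; rewrite addrAC linearB linearZ /=.
have : 0 < t * L d by exact: mulr_gt0.
lra.
Unshelve. all: by end_near.
Qed.

Lemma not_interior_tangent_halfspace g x y t :
  let z := t *: x + (1 - t) *: y in
  concave_fun g -> differentiable g z -> 0 < t <= 1 -> g z = 0 -> 0 < g y ->
  ~ interior (tangent_halfspace g z) x.
Proof.
move=> z cg dgz /andP[t_gt0 t_le1] gz0 gy_gt0.
have Ld_gt0 : 0 < 'd g z (y - x).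
  have := concave_le_tangent cg dgz y.
  have -> : y - z = t *: (y - x) by apply/rowP => i; rewrite !mxE; ring.
  rewrite gz0 add0r linearZ /= => gy_le.
  by rewrite -(pmulr_rgt0 _ t_gt0) (lt_le_trans gy_gt0).
move=> /(halfspace_interior_gt Ld_gt0).
have -> : x - z = (t - 1) *: (y - x) by apply/rowP => i; rewrite !mxE; ring.
rewrite gz0 add0r linearZ /=; nra.
Qed.

Lemma hhat_ge0_bigcap g l u :
  concave_fun g -> (forall z, differentiable g z) ->
  (exists z, box l u z /\ 0 <= g z) ->
  [set x | 0 <= hhat g l u x] =
  \bigcap_(z in [set z | box l u z /\ 0 <= g z]) tangent_halfspace g z.
Proof.
move=> cg dg [z0 [bz0 gz0]]; apply/seteqP; split => x /= hx.
- move=> z [bz gz]; apply: le_trans hx _; apply: ge_inf; last by exists z.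
  exists (g x) => _ [w [_ [_ ->]]]; exact: concave_le_tangent.
- apply: lb_le_inf; first by exists (g z0 + 'd g z0 (x - z0)), z0.
  by move=> _ [z [bz [gz ->]]]; exact: hx.
Qed.

End TangentHalfspaces.

Theorem proposition1 (R : realType) (n : nat) (h have : 'rV[R]_n -> R)
    (l u xbar : 'rV[R]_n) :
  (forall i : 'I_n, l ord0 i <= u ord0 i) ->
  box l u xbar -> 0 < h xbar ->
  (forall z, differentiable have z) ->
  concave_underestimator have h xbar ->
  let S := [set x | box l u x /\ h x <= 0] in
  let C := [set x | 0 <= hhat have l u x] in
  S_free S C /\ [set x | 0 <= have x] `<=` C.
Proof.
move=> _ bxbar hxbar dg [cg [le_gh gxbar]] S C.
have C_cap : C = \bigcap_(z in [set z | box l u z /\ 0 <= have z])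
                   tangent_halfspace have z.
  by apply: hhat_ge0_bigcap => //; exists xbar; rewrite gxbar ltW.
have gxbar_gt0 : 0 < have xbar by rewrite gxbar.
rewrite C_cap; split; [split|].
- by apply: convex_set_bigcap => z _; exact: convex_set_halfspace.
- apply/seteqP; split => // x [[bx hx_le0] x_int].
  have cont_g : continuous have by move=> z; exact: differentiable_continuous.
  have [t t01 gz0] := segment_root cont_g (le_trans (le_gh x) hx_le0) gxbar_gt0.
  apply: (not_interior_tangent_halfspace cg (dg _) t01 gz0 gxbar_gt0).
  apply: interiorS x_int; apply: bigcap_inf; split; last by rewrite gz0.
  by apply: convex_set_box => //; case/andP: t01 => /ltW -> ->.
- move=> x gx_ge0 z [_ gz_ge0] /=.
  by apply: le_trans (concave_le_tangent cg (dg z) x).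
Qed.
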